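(* Let $s\ge1$ be an integer, let $(G,Z)$ be a monic plantation, and let $\mathcal{S}$ be a normal set of transitions of $(G,Z)$. Then there exists $X\subseteq Z$ with $|X|\le\phi(s)$ such that at most $|Z|$ members of $\mathcal{S}$ have no foot in $X$.
   Context: Graphs are finite and simple. Two subgraphs are anticomplete if their vertex sets are disjoint and no edge joins them. $G$ is $s\mathcal{O}$-free if no $s$ cycles of $G$ are pairwise vertex-disjoint and pairwise anticomplete. $Z\subseteq V(G)$ is cycle-hitting if every cycle of $G$ has a vertex in $Z$. A plantation is a pair $(G,Z)$ with $G$ an $s\mathcal{O}$-free graph and $Z$ cycle-hitting. Let $F=G\setminus Z$ and $N$ the set of vertices of $V(G)\setminus Z$ with a neighbour in $Z$. $(G,Z)$ is monic if $Z$ is stable and each vertex of $N$ has exactly one neighbour in $Z$. A transition is a path of $F$ of length at least one with both ends in $N$ and no internal vertex in $N$; a vertex of $Z$ adjacent to an end of a transition $P$ is a foot of $P$. A set $\mathcal{S}$ of transitions is normal if (i) for all distinct $P,Q\in\mathcal{S}$, either $P,Q$ are anticomplete or have a common end, and (ii) each $P\in\mathcal{S}$ has an edge belonging to no other member of $\mathcal{S}$. $\phi(s)\ge0$ denotes a number (which exists by the Erdős–Pósa theorem) such that every multigraph in which no $s$ cycles are pairwise vertex-disjoint has a set of at most $\phi(s)$ vertices meeting every cycle; in multigraphs, loops and pairs of parallel edges count as cycles. *)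

From mathcomp Require Import all_boot.
Set Implicit Arguments. Unset Strict Implicit. Unset Printing Implicit Defensive.

Section Graphs.
Variable T : finType.

Definition gcycle (e : rel T) (p : seq T) : bool :=
  [&& uniq p, 3 <= size p & cycle e p].

Definition anticomplete (e : rel T) (p q : seq T) : bool :=
  all (fun x => all (fun y => (x != y) && ~~ e x y) q) p.

Definition sO_free (s : nat) (e : rel T) : Prop :=
  ~ exists c : 'I_s -> seq T,
      (forall i, gcycle e (c i)) /\
      (forall i j, i != j -> anticomplete e (c i) (c j)).

Definition cycle_hitting (e : rel T) (Z : {set T}) : Prop :=
  forall p, gcycle e p -> has (fun x => x \in Z) p.

Definition plantation (s : nat) (e : rel T) (Z : {set T}) : Prop :=
  sO_free s e /\ cycle_hitting e Z.

Definition Nset (e : rel T) (Z : {set T}) (x : T) : bool :=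
  (x \notin Z) && [exists z in Z, e x z].

Definition monic (e : rel T) (Z : {set T}) : Prop :=
  (forall z1 z2, z1 \in Z -> z2 \in Z -> ~~ e z1 z2) /\
  (forall x, Nset e Z x -> #|[set z in Z | e x z]| = 1).

(* A transition: a path of F = G \ Z with at least one edge, both ends in N,
   no internal vertex in N. *)
Definition transition (e : rel T) (Z : {set T}) (p : seq T) : bool :=
  match p with
  | [::] => false
  | x :: p' =>
      [&& uniq p, 0 < size p', path e x p',
          all (fun y => y \notin Z) p,
          Nset e Z x, Nset e Z (last x p')
        & all (fun y => ~~ Nset e Z y) (take (size p').-1 p')]
  end.

Definition ends (p : seq T) : seq T :=
  match p with [::] => [::] | x :: p' => [:: x; last x p'] end.

Definition pedges (p : seq T) : seq (T * T) := zip p (behead p).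

Definition has_edge (p : seq T) (u v : T) : bool :=
  ((u, v) \in pedges p) || ((v, u) \in pedges p).

Definition normal_set (e : rel T) (S : seq (seq T)) : Prop :=
  (forall P Q, P \in S -> Q \in S -> P != Q ->
     anticomplete e P Q || has (fun x => x \in ends Q) (ends P)) /\
  (forall P, P \in S -> exists2 uv, uv \in pedges P &
     forall Q, Q \in S -> Q != P -> ~~ has_edge Q uv.1 uv.2).

Definition foot (e : rel T) (Z : {set T}) (P : seq T) (z : T) : bool :=
  (z \in Z) && has (e z) (ends P).

End Graphs.

(* Multigraphs on a finite vertex type V, given by a symmetric multiplicity
   function m (m v v = number of loops at v). *)
Definition mcycle (V : finType) (m : V -> V -> nat) (p : seq V) : bool :=
  uniq p &&
  match p with
  | [:: v] => 0 < m v v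
  | [:: u; v] => 1 < m u v
  | _ => (3 <= size p) && cycle (fun u v => 0 < m u v) p
  end.

Definition EP_bound (s k : nat) : Prop :=
  forall (V : finType) (m : V -> V -> nat),
    (forall u v, m u v = m v u) ->
    ~ (exists c : 'I_s -> seq V,
         (forall i, mcycle m (c i)) /\
         (forall i j, i != j -> all (fun x => x \notin c j) (c i))) ->
    exists X : {set V}, #|X| <= k /\
      forall p, mcycle m p -> has (fun x => x \in X) p.

From mathcomp Require Import all_boot.
Set Implicit Arguments. Unset Strict Implicit. Unset Printing Implicit Defensive.

(** Contract each transition [P] of [S] to an edge joining the feet [hfoot P]
    and [lfoot P] of its two ends (unique, as the plantation is monic): this
    gives a multigraph [H] on [Z]. A cycle [c] of [H] lifts to a cycle of [G]
    inside [lift_set c]: delete the private edge [uv] of a transition on [c];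
    its ends stay connected through the feet and the other transitions of [c].
    Lifts of disjoint cycles of [H] are anticomplete, by stability of [Z],
    uniqueness of feet and normality of [S]. Hence [H] has no [s] disjoint
    cycles, and Erdős–Pósa gives [X] with [|X| <= phi s] meeting every cycle
    of [H]. The transitions without a foot in [X] then form a forest on
    [Z :\: X], so there are at most [|Z|] of them. *)

Section EdgesOfSequences.
Variable T : finType.
Implicit Types (s p q : seq T) (u v a b x : T).

Lemma mem_pedges s a b : (a, b) \in pedges s -> (a \in s) && (b \in s).
Proof.
rewrite /pedges; elim: s => [|x [|y s] IH] //=.
rewrite inE => /orP[/eqP[-> ->]|/IH/andP[ha hb]]; first by rewrite !inE !eqxx orbT.
by rewrite !(in_cons x) ha hb !orbT.
Qed.

Lemma path_pedges (r : rel T) x q :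
  path r x q = all (fun ab => r ab.1 ab.2) (pedges (x :: q)).
Proof. by elim: q x => [|y q IH] x //=; rewrite IH. Qed.

Lemma pedges_split s u v : (u, v) \in pedges s -> exists p q, s = rcons p u ++ v :: q.
Proof.
rewrite /pedges; elim: s => [|x [|y s] IH] //=.
rewrite inE => /orP[/eqP[-> ->]|/IH[p [q ->]]]; first by exists [::], s.
by exists (x :: p), q.
Qed.

Lemma pedges_rcons_cat p u v q :
  pedges (rcons p u ++ v :: q) = pedges (rcons p u) ++ (u, v) :: pedges (v :: q).
Proof. by elim: p => [|x [|y p] IH] //; rewrite /pedges /= in IH *; rewrite IH. Qed.

Lemma ends_sub (P : seq T) : {subset ends P <= P}.
Proof. by case: P => [|x p] w // /[!inE] /orP[]/eqP->; [apply: mem_head | apply: mem_last]. Qed.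

End EdgesOfSequences.

Lemma path_all_next (T : Type) (r : rel T) (P : pred T) x p :
  (forall a b, r a b -> P b) -> path r x p -> all P p.
Proof. by move=> rP; elim: p x => [|y p IH] x //= /andP[/rP -> /IH]. Qed.

Lemma connect_pedges (T : finType) (r : rel T) (s : seq T) y :
  {in pedges s, forall ab, r ab.1 ab.2} -> connect r (head y s) (last y s).
Proof.
case: s => [|x q] hr /=; first exact: connect0.
by apply/connectP; exists q => //; rewrite path_pedges; apply/allP.
Qed.

Lemma mcycle_mono (V : finType) (m1 m2 : V -> V -> nat) p :
  (forall x y, m1 x y <= m2 x y) -> mcycle m1 p -> mcycle m2 p.
Proof.
move=> le12; have lt12 x y k : k < m1 x y -> k < m2 x y.
  by move=> /leq_trans; apply.
rewrite /mcycle => /andP[-> hp]; case: p hp => [|x [|y [|z p]]] //=; try exact: lt12.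
by move=> /and3P[/lt12 -> /lt12 -> hc]; apply: sub_path hc => ? ?; apply: lt12.
Qed.

Lemma mcycle_neighbour (V : finType) (m : V -> V -> nat) p x :
  (forall x y, m x y = m y x) -> mcycle m p -> x \in p -> exists y, 0 < m x y.
Proof.
move=> msym /andP[_ hp] hx; case: p hp hx => [|u [|v [|w p]]] // hp hx.
- by exists u; move: hx; rewrite inE => /eqP->.
- by move: hx; rewrite !inE => /orP[]/eqP->; [exists v | exists u; rewrite msym];
    apply: leq_trans hp.
- have /andP[_ hc] := hp.
  by exists (next [:: u, v, w & p] x); apply: next_cycle hc hx.
Qed.

Section MultigraphOfEdges.
Variables (I : eqType) (V : finType) (g1 g2 : I -> V).
Implicit Types (i j : I) (E L : seq I) (x y : V).

Definition joins i x y := (g1 i == x) && (g2 i == y) || (g1 i == y) && (g2 i == x).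
Definition mult E x y := count (fun i => joins i x y) E.
Definition adj E : rel V := fun x y => 0 < mult E x y.

Lemma joinsC i x y : joins i x y = joins i y x.
Proof. by rewrite /joins orbC. Qed.

Lemma joins_mem i x y w : joins i x y -> (w \in [:: g1 i; g2 i]) = (w \in [:: x; y]).
Proof. by case/orP=> /andP[/eqP-> /eqP->]; rewrite !inE // orbC. Qed.

Lemma joins_sub i x y (c : seq V) :
  joins i x y -> x \in c -> y \in c -> (g1 i \in c) && (g2 i \in c).
Proof. by case/orP=> /andP[/eqP-> /eqP->] -> ->. Qed.

Lemma multC E x y : mult E x y = mult E y x.
Proof. by apply: eq_count => i; rewrite joinsC. Qed.

Lemma adjC E : symmetric (adj E).
Proof. by move=> x y; rewrite /adj multC. Qed.

Lemma adjP E x y : reflect (exists2 i, i \in E & joins i x y) (adj E x y).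
Proof. by rewrite /adj -has_count; apply: hasP. Qed.

Lemma mult_subseq L E x y : subseq L E -> mult L x y <= mult E x y.
Proof. exact: leq_count_subseq. Qed.

Lemma adj_cons i L x y : adj L x y -> adj (i :: L) x y.
Proof. by move=> /leq_trans; apply; apply/mult_subseq/subseq_cons. Qed.

Lemma mcycle_endpoint E p x : mcycle (mult E) p -> x \in p ->
  exists2 i, i \in E & x \in [:: g1 i; g2 i].
Proof.
move=> hp /(mcycle_neighbour (@multC E) hp)[y /adjP[i iE hi]].
by exists i; rewrite // (joins_mem _ hi) mem_head.
Qed.

Lemma mcycle_of_connect i L : connect (adj L) (g1 i) (g2 i) ->
  exists p, mcycle (mult (i :: L)) p.
Proof.
move=> /connectP[p0 hp0 hlast0].
have joins_i : joins i (g1 i) (g2 i) by rewrite /joins !eqxx.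
case: (eqVneq (g1 i) (g2 i)) => [e12|n12].
  by exists [:: g1 i]; rewrite /mcycle /= /mult /= {2}e12 joins_i.
case: (shortenP hp0) hlast0 => p hp up _ hlast.
case: p hp up hlast => [|b1 [|b2 p]] hp up /= hlast; first by rewrite hlast eqxx in n12.
- exists [:: g1 i; g2 i]; rewrite /mcycle /= inE n12 /mult /= joins_i ltnS.
  by rewrite hlast; move: hp => /andP[].
- exists [:: g1 i, b1, b2 & p]; rewrite /mcycle up.
  change (path (adj (i :: L)) (g1 i) (rcons [:: b1, b2 & p] (g1 i))).
  rewrite rcons_path (sub_path (@adj_cons i L) hp) /= -hlast.
  by rewrite adjC /adj /mult /= joins_i.
Qed.

Lemma acyclic_labelling (A : {set V}) E :
  {in E, forall i, (g1 i \in A) && (g2 i \in A)} -> (forall p, ~~ mcycle (mult E) p) ->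
  exists lab : V -> V,
    (forall x y, lab x = lab y -> connect (adj E) x y) /\ #|lab @: A| + size E <= #|A|.
Proof.
elim: E => [|i L IH] endsA acyc.
  by exists id; split=> [x y ->|]; [apply: connect0 | rewrite card_imset // addn0].
have [lab [lab_conn card_lab]] : exists lab : V -> V,
    (forall x y, lab x = lab y -> connect (adj L) x y) /\ #|lab @: A| + size L <= #|A|.
  apply: IH => [j jL|p]; first by apply: endsA; rewrite inE jL orbT.
  by apply: contra (acyc p); apply: mcycle_mono => x y; apply/mult_subseq/subseq_cons.
have Ai : (g1 i \in A) && (g2 i \in A) by apply: endsA; rewrite mem_head.
have lab_ne : lab (g1 i) != lab (g2 i).
  by apply/eqP=> /lab_conn/mcycle_of_connect[p]; apply/negP/acyc.
(* The edge [i] merges two distinct label classes, so one label disappears. *)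
pose r x := if lab x == lab (g2 i) then g1 i else x.
have r_conn x : connect (adj (i :: L)) x (r x).
  rewrite /r; case: eqP => [/lab_conn hx|_]; last exact: connect0.
  apply: connect_trans (connect_sub _ hx) (connect1 _) => [a b /adj_cons /connect1 //|].
  by rewrite adjC /adj /mult /= /joins !eqxx.
exists (lab \o r); split=> [x y /lab_conn /connect_sub hxy|].
  have csym := sym_connect_sym (@adjC (i :: L)).
  apply: connect_trans (r_conn x) _; rewrite csym.
  by apply: connect_trans (r_conn y) _; rewrite csym; apply: hxy => a b /adj_cons /connect1.
have sub_new : (lab \o r) @: A \subset lab @: A :\ lab (g2 i).
  apply/subsetP=> _ /imsetP[x xA ->]; rewrite /= /r in_setD1.
  case: ifP => [_|/negbT hx]; first by rewrite lab_ne imset_f //; case/andP: Ai.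
  by rewrite hx imset_f.
rewrite addnS -addSn (leq_trans _ card_lab) // leq_add2r.
rewrite [X in _ < X](cardsD1 (lab (g2 i))) imset_f; last by case/andP: Ai.
by rewrite add1n ltnS subset_leq_card.
Qed.

Lemma acyclic_size_le (A : {set V}) E :
  {in E, forall i, (g1 i \in A) && (g2 i \in A)} -> (forall p, ~~ mcycle (mult E) p) ->
  size E <= #|A|.
Proof.
move=> endsA acyc; have [lab [_ card_lab]] := acyclic_labelling endsA acyc.
exact: leq_trans (leq_addl _ _) card_lab.
Qed.

Definition edges_within E (c : seq V) i :=
  [seq j <- E | [&& j != i, g1 j \in c & g2 j \in c]].

Lemma adj_within E (c : seq V) i a b : a \in c -> b \in c -> ~~ joins i a b ->
  adj E a b -> adj (edges_within E c i) a b.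
Proof.
move=> ac bc iab /adjP[j jE jab]; apply/adjP; exists j => //.
rewrite mem_filter jE (joins_sub jab) // !andbT.
by apply: contraNneq iab => <-.
Qed.

Lemma mcycle_closing_edge E c : uniq E -> mcycle (mult E) c ->
  exists2 i, i \in E & [/\ g1 i \in c, g2 i \in c &
    connect (adj (edges_within E c i)) (g1 i) (g2 i)].
Proof.
move=> Euniq; case: c => [|x [|y [|z c]]] /andP[cuniq hc]; first by [].
- have /adjP[i iE] := hc; rewrite /joins orbb => /andP[/eqP xi /eqP yi].
  by exists i => //; rewrite xi yi mem_head connect0.
- have /adjP[i iE hi] : adj E x y by apply: ltnW.
  have : 0 < count (fun j => joins j x y) (rem i E) by rewrite count_rem iE hi subn_gt0.
  rewrite -has_count => /hasP[j]; rewrite mem_rem_uniq // => /andP[ji jE] hj.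
  have /andP[i1 i2] := joins_sub hi (mem_head _ _) (mem_last _ [:: y]).
  have jL : j \in edges_within E [:: x; y] i.
    by rewrite mem_filter ji jE (joins_sub hj) ?mem_head ?(mem_last _ [:: y]).
  exists i => //; split=> //; case/orP: hi => /andP[/eqP-> /eqP->];
    by apply/connect1/adjP; exists j; rewrite // joinsC.
- have /andP[_ /= /and3P[hxy hyz hzc]] := hc.
  move: cuniq => /= /and3P[xn yn _]; set cyc := [:: x, y, z & c].
  have /adjP[i iE hi] := hxy.
  have unjoined w a b : w \in [:: x; y] -> w \notin [:: a; b] -> ~~ joins i a b.
    by move=> wxy; apply: contra => iab; rewrite -(joins_mem _ iab) (joins_mem _ hi).
  (* Each edge of the path y, z, ..., x misses x or y, so none of them is [i]. *)
  have yx : connect (adj (edges_within E cyc i)) y x.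
    apply/connectP; exists (z :: rcons c x); last by rewrite /= last_rcons.
    rewrite /= adj_within ?(unjoined x) ?inE ?eqxx ?orbT //=; last first.
      by apply: contra xn; rewrite !inE => /orP[]->; rewrite ?orbT.
    apply: (sub_in_path (P := [pred w | (w \in cyc) && (w != y)])) hzc.
      move=> a b /andP[ac ay] /andP[bc b_y]; apply: adj_within => //.
      by apply: (unjoined y); rewrite ?inE ?eqxx ?orbT // negb_or !(eq_sym y) ay.
    apply/allP=> w; rewrite -rcons_cons mem_rcons inE /= /cyc.
    case/orP=> [/eqP->|wzc].
      by rewrite mem_head; apply: contraNneq xn => ->; apply: mem_head.
    by rewrite (in_cons x) (in_cons y) wzc !orbT; apply: contraNneq yn => <-.
  have /andP[i1 i2] : (g1 i \in cyc) && (g2 i \in cyc).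
    by rewrite /cyc; apply: (joins_sub hi); rewrite !inE eqxx ?orbT.
  exists i => //; split=> //.
  by case/orP: hi => /andP[/eqP-> /eqP->] //; rewrite (sym_connect_sym (@adjC _)).
Qed.

Lemma connect_adj_sub (r : rel V) L x y : connect_sym r ->
  {in L, forall j, connect r (g1 j) (g2 j)} -> connect (adj L) x y -> connect r x y.
Proof.
move=> rsym hL; apply: connect_sub => a b /adjP[j jL].
by case/orP=> /andP[/eqP<- /eqP<-]; [|rewrite rsym]; apply: hL.
Qed.

End MultigraphOfEdges.

Section MinusEdge.
Variables (T : finType) (e : rel T).
Implicit Types (W : {set T}) (u v a b : T).

Definition minus_edge W u v : rel T := fun a b =>
  [&& e a b, a \in W, b \in W, (a, b) != (u, v) & (a, b) != (v, u)].

Lemma minus_edge_sym W u v : symmetric e -> symmetric (minus_edge W u v).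
Proof.
move=> esym a b; rewrite /minus_edge esym !xpair_eqE.
by case: (a == u) (a == v) (b == u) (b == v) (a \in W) (b \in W) => [] [] [] [] [] [].
Qed.

Lemma minus_edge_off W u v a b : e a b -> a \in W -> b \in W -> a \notin [:: u; v] ->
  minus_edge W u v a b.
Proof.
rewrite /minus_edge !xpair_eqE !inE negb_or => -> -> -> /andP[au av] /=.
by rewrite (negbTE au) (negbTE av).
Qed.

Lemma minus_edge_cycle W u v : irreflexive e -> e u v -> v \in W ->
  connect (minus_edge W u v) v u -> exists q, gcycle e q && all (mem W) q.
Proof.
move=> eirr uv vW /connectP[p0 hp0 last0].
case: (shortenP hp0) last0 => p hp up _ hlast.
exists (v :: p); rewrite /gcycle up /= vW.
rewrite (path_all_next _ hp) => [|a b /and5P[] //].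
case: p hp up hlast => [|w [|w' p]] hp up hlast.
- by rewrite hlast eirr in uv.
- by move: hlast hp => /= <-; rewrite /= /minus_edge eqxx !andbF.
- by rewrite rcons_path -hlast uv !andbT; apply: sub_path hp => a b /andP[].
Qed.

End MinusEdge.

Section Lifting.
Variables (T : finType) (e : rel T).
Hypotheses (esym : symmetric e) (eirr : irreflexive e).
Variable Z : {set T}.
Hypothesis Zstable : forall z1 z2, z1 \in Z -> z2 \in Z -> ~~ e z1 z2.
Hypothesis Nfoot_unique : forall x, Nset e Z x -> #|[set z in Z | e x z]| = 1.
Variable S : seq (seq T).
Hypotheses (Suniq : uniq S) (Strans : all (transition e Z) S) (Snormal : normal_set e S).
Variable x0 : T.

Definition zfoot x := odflt x [pick z in Z | e x z].
Definition hfoot (P : seq T) := zfoot (head x0 P).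
Definition lfoot (P : seq T) := zfoot (last x0 P).

Lemma zfootP x : Nset e Z x ->
  [/\ zfoot x \in Z, e x (zfoot x) & forall z, z \in Z -> e x z -> z = zfoot x].
Proof.
move=> Nx; have /cards1P[z0 Zx] : #|[set z in Z | e x z]| == 1 by rewrite Nfoot_unique.
have Zx_mem z : (z \in Z) && e x z = (z == z0) by rewrite -in_set1 -Zx inE.
rewrite /zfoot; case: pickP => [y|none]; last by have := none z0; rewrite Zx_mem eqxx.
rewrite Zx_mem => /eqP-> /=; have /andP[-> ->] : (z0 \in Z) && e x z0 by rewrite Zx_mem.
by split=> // z zZ xz; apply/eqP; rewrite -Zx_mem zZ.
Qed.

Lemma transition_notin_Z P w : P \in S -> w \in P -> w \notin Z.
Proof.
move=> /(allP Strans); case: P => [|x p] // /and5P[_ _ _ PZ _] wP.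
exact: allP PZ w wP.
Qed.

Lemma transition_edge P a b : P \in S -> (a, b) \in pedges P -> e a b.
Proof.
move=> /(allP Strans); case: P => [|x p] // /and4P[_ _ xp _] ab.
by move: xp; rewrite path_pedges => /allP/(_ _ ab).
Qed.

Lemma transition_uniq P : P \in S -> uniq P.
Proof. by move=> /(allP Strans); case: P => [|x p] // /andP[]. Qed.

Lemma hfootP P : P \in S -> [/\ hfoot P \in Z, e (head x0 P) (hfoot P) & head x0 P \in ends P].
Proof.
move=> /(allP Strans); case: P => [|x p] // /and5P[_ _ _ _ /and3P[Nx _ _]].
by have [xZ xf _] := zfootP Nx; rewrite /hfoot /= mem_head.
Qed.

Lemma lfootP P : P \in S -> [/\ lfoot P \in Z, e (last x0 P) (lfoot P) & last x0 P \in ends P].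
Proof.
move=> /(allP Strans); case: P => [|x p] // /and5P[_ _ _ _ /and3P[_ Nl _]].
by have [lZ lf _] := zfootP Nl; rewrite /lfoot /= !inE eqxx orbT.
Qed.

Lemma ends_zfoot P w : w \in ends P -> zfoot w \in [:: hfoot P; lfoot P].
Proof. by case: P => [|x p] //; rewrite !inE => /orP[]/eqP->; rewrite eqxx ?orbT. Qed.

Lemma foot_of_vertex P a b : P \in S -> b \in P -> a \in Z -> e b a ->
  a \in [:: hfoot P; lfoot P].
Proof.
move=> PS bP aZ ba; have bZ := transition_notin_Z PS bP.
have Nb : Nset e Z b by rewrite /Nset bZ; apply/existsP; exists a; rewrite aZ.
have [_ _ /(_ a aZ ba) ->] := zfootP Nb.
move: (allP Strans P PS) bP; case: P {PS} => [|x p] //= /and5P[_ _ _ _ /and3P[_ _ inner]].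
rewrite inE => /orP[/eqP->|]; first by rewrite mem_head.
case/lastP: p inner => [|q y] //; rewrite size_rcons /= -cats1 take_size_cat //.
rewrite mem_cat inE => /allP inner /orP[/inner|/eqP->]; first by rewrite Nb.
by rewrite /lfoot /= last_cat !inE eqxx orbT.
Qed.

Definition lift_set (c : seq T) : {set T} :=
  [set w | (w \in c) && (w \in Z)
           || has (fun P => [&& hfoot P \in c, lfoot P \in c & w \in P]) S].

Lemma lift_set_Z c w : w \in c -> w \in Z -> w \in lift_set c.
Proof. by move=> wc wZ; rewrite inE wc wZ. Qed.

Lemma lift_set_transition c P w : P \in S -> hfoot P \in c -> lfoot P \in c -> w \in P ->
  w \in lift_set c.
Proof.
by move=> PS hc lc wP; rewrite inE; apply/orP; right; apply/hasP; exists P; rewrite ?hc ?lc.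
Qed.

Lemma Z_transition_anticomplete P a b : P \in S -> b \in P -> a \in Z ->
  a \notin [:: hfoot P; lfoot P] -> (a != b) && ~~ e a b.
Proof.
move=> PS bP aZ a_nfoot; have bZ := transition_notin_Z PS bP.
rewrite (contraNneq _ bZ) => [|<-//]; apply: contra a_nfoot => ab.
by apply: foot_of_vertex bP aZ _; rewrite // esym.
Qed.

Lemma lift_set_anticomplete c d a b : all (fun x => x \notin d) c ->
  a \in lift_set c -> b \in lift_set d -> (a != b) && ~~ e a b.
Proof.
have feet_in (s : seq T) P w : hfoot P \in s -> lfoot P \in s ->
    w \in [:: hfoot P; lfoot P] -> w \in s by move=> h l /[!inE] /orP[]/eqP->.
move=> /allP cd /[!inE] /orP[/andP[ac aZ]|/hasP[P PS /and3P[Pc1 Pc2 aP]]]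
  /orP[/andP[bd bZ]|/hasP[Q QS /and3P[Qd1 Qd2 bQ]]].
- by rewrite (Zstable aZ bZ) andbT; apply: contraNneq (cd a ac) => ->.
- apply: Z_transition_anticomplete QS bQ aZ _.
  by apply: contra (cd a ac); apply: feet_in.
- rewrite eq_sym esym; apply: Z_transition_anticomplete PS aP bZ _.
  by apply: contraL bd => /(feet_in _ _ _ Pc1 Pc2)/cd.
- have PQ : P != Q by apply: contraNneq (cd _ Pc1) => ->.
  case/orP: (proj1 Snormal P Q PS QS PQ) => [anti|/hasP[w wP wQ]].
    exact: allP (allP anti a aP) b bQ.
  have := cd _ (feet_in _ _ _ Pc1 Pc2 (ends_zfoot wP)).
  by rewrite (feet_in _ _ _ Qd1 Qd2 (ends_zfoot wQ)).
Qed.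

Section Connections.
Variables (c : seq T) (u v : T).
Hypotheses (uZ : u \notin Z) (vZ : v \notin Z).
Local Notation R := (minus_edge e (lift_set c) u v).

Lemma minus_edge_transition P a b : P \in S -> hfoot P \in c -> lfoot P \in c ->
  (a, b) \in pedges P -> (a, b) != (u, v) -> (a, b) != (v, u) -> R a b.
Proof.
move=> PS hc lc ab abuv abvu; have /andP[aP bP] := mem_pedges ab.
by rewrite /minus_edge (transition_edge PS ab) !(lift_set_transition PS hc lc) ?abuv.
Qed.

Lemma connect_feet_ends P : P \in S -> hfoot P \in c -> lfoot P \in c ->
  connect R (hfoot P) (head x0 P) /\ connect R (last x0 P) (lfoot P).
Proof.
move=> PS hc lc; have [hZ he hends] := hfootP PS; have [lZ le lends] := lfootP PS.
have off z : z \in Z -> z \notin [:: u; v].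
  by move=> zZ; rewrite !inE negb_or; apply/andP; split;
    [apply: contraNneq uZ | apply: contraNneq vZ] => <-.
have inP w : w \in ends P -> w \in lift_set c.
  by move/ends_sub; apply: lift_set_transition.
split; apply: connect1; last rewrite minus_edge_sym //.
  by apply: minus_edge_off; [rewrite esym | apply: lift_set_Z | apply: inP | apply: off].
by apply: minus_edge_off; [rewrite esym | apply: lift_set_Z | apply: inP | apply: off].
Qed.

Lemma connect_transition_feet Q : Q \in S -> hfoot Q \in c -> lfoot Q \in c ->
  ~~ has_edge Q u v -> connect R (hfoot Q) (lfoot Q).
Proof.
move=> QS hc lc Quv; have [hh ll] := connect_feet_ends QS hc lc.
apply: connect_trans hh (connect_trans _ ll); apply: connect_pedges => [[a b]] ab.
by apply: (minus_edge_transition QS hc lc ab); apply: contraNneq Quv => abuv;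
  rewrite /has_edge -abuv ab ?orbT.
Qed.

Lemma connect_private_edge P : P \in S -> hfoot P \in c -> lfoot P \in c ->
  (u, v) \in pedges P -> connect R (lfoot P) (hfoot P) -> connect R v u.
Proof.
move=> PS hc lc uvP lh; have [hh ll] := connect_feet_ends PS hc lc.
have [p [q Peq]] := pedges_split uvP.
have Rseg s : {subset pedges s <= pedges P} -> (u \notin s) || (v \notin s) ->
    {in pedges s, forall ab, R ab.1 ab.2}.
  move=> sP uvs [a b] ab; have /andP[aS bS] := mem_pedges ab.
  apply: minus_edge_transition (sP _ ab) _ _ => //;
    by apply: contraTneq uvs => -[<- <-]; rewrite aS bS.
move: (transition_uniq PS); rewrite Peq cat_uniq => /and3P[_ /hasPn disj _].
have vl : connect R v (last x0 P).
  rewrite Peq last_cat; apply: (@connect_pedges _ _ (v :: q) v).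
  apply: Rseg; first by move=> ab; rewrite Peq pedges_rcons_cat mem_cat inE => ->; rewrite !orbT.
  by apply/orP; left; apply/negP => /disj; rewrite mem_rcons mem_head.
have hu : connect R (head x0 P) u.
  have -> : head x0 P = head u (rcons p u) by rewrite Peq; case: (p).
  rewrite -[X in connect _ _ X](last_rcons u p u); apply: connect_pedges.
  apply: Rseg; first by move=> ab; rewrite Peq pedges_rcons_cat mem_cat => ->.
  by apply/orP; right; apply: disj; rewrite mem_head.
exact: connect_trans vl (connect_trans ll (connect_trans lh (connect_trans hh hu))).
Qed.

End Connections.

Lemma lift_mcycle c : mcycle (mult hfoot lfoot S) c ->
  exists q, gcycle e q && all (mem (lift_set c)) q.
Proof.
move=> cyc; have [P PS [hc lc hl]] := mcycle_closing_edge Suniq cyc.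
have [[u v] uvP private] := proj2 Snormal P PS.
have /andP[uP vP] := mem_pedges uvP.
have [uZ vZ] := (transition_notin_Z PS uP, transition_notin_Z PS vP).
have Rsym := sym_connect_sym (minus_edge_sym (lift_set c) u v esym).
apply: (minus_edge_cycle eirr (transition_edge PS uvP) (lift_set_transition PS hc lc vP)).
apply: (connect_private_edge uZ vZ PS hc lc uvP); rewrite Rsym.
apply: connect_adj_sub hl => // Q; rewrite mem_filter => /andP[/and3P[QP Qhc Qlc] QS].
exact: (connect_transition_feet uZ vZ QS Qhc Qlc (private Q QS QP)).
Qed.

Lemma lift_no_disjoint_mcycles s : sO_free s e ->
  ~ exists cs : 'I_s -> seq T, (forall i, mcycle (mult hfoot lfoot S) (cs i)) /\
      (forall i j, i != j -> all (fun x => x \notin cs j) (cs i)).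
Proof.
move=> free [cs [cyc disj]]; apply: free.
exists (fun i => xchoose (lift_mcycle (cyc i))); split=> [i|i j ij].
  by have /andP[] := xchooseP (lift_mcycle (cyc i)).
have /andP[_ /allP Li] := xchooseP (lift_mcycle (cyc i)).
have /andP[_ /allP Lj] := xchooseP (lift_mcycle (cyc j)).
apply/allP=> a ai; apply/allP=> b bj.
exact: lift_set_anticomplete (disj i j ij) (Li a ai) (Lj b bj).
Qed.

Lemma count_footless_le (X : {set T}) :
  (forall p, mcycle (mult hfoot lfoot S) p -> has (fun x => x \in X) p) ->
  count (fun P => ~~ [exists z in X :&: Z, foot e Z P z]) S <= #|Z|.
Proof.
move=> hit; rewrite -size_filter; set E := filter _ S.
have feetE : {in E, forall P, (hfoot P \in Z :\: X) && (lfoot P \in Z :\: X)}.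
  move=> P; rewrite mem_filter => /andP[nofoot PS].
  have notX z w : z \in Z -> e w z -> w \in ends P -> z \in Z :\: X.
    move=> zZ wz wends; rewrite in_setD zZ andbT; apply: contra nofoot => zX.
    by apply/existsP; exists z; rewrite inE zX zZ /foot zZ; apply/hasP; exists w; rewrite // esym.
  have [hZ he hends] := hfootP PS; have [lZ le lends] := lfootP PS.
  by rewrite (notX _ _ hZ he hends) (notX _ _ lZ le lends).
apply: leq_trans (acyclic_size_le feetE _) (subset_leq_card (subsetDl Z X)) => p.
apply/negP => pcyc; have [x xp xX] : exists2 x, x \in p & x \in X.
  apply/hasP/hit; apply: mcycle_mono pcyc => x y; apply/mult_subseq/filter_subseq.
have [P PE xP] := mcycle_endpoint pcyc xp; have /andP[hA lA] := feetE P PE.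
by move: xP; rewrite !inE => /orP[]/eqP xf; [move: hA | move: lA]; rewrite -xf in_setD xX.
Qed.

End Lifting.

Theorem mainTheorem12 (s : nat) (hs : 1 <= s) (phis : nat) (hphi : EP_bound s phis)
  (T : finType) (e : rel T) (esym : symmetric e) (eirr : irreflexive e)
  (Z : {set T}) (hplant : plantation s e Z) (hmonic : monic e Z)
  (S : seq (seq T)) (Suniq : uniq S) (Strans : all (transition e Z) S)
  (Snormal : normal_set e S) :
  exists X : {set T}, [/\ X \subset Z, #|X| <= phis &
    count (fun P => ~~ [exists z in X, foot e Z P z]) S <= #|Z| ].
Proof.
case: S Suniq Strans Snormal => [|P0 S'] Suniq Strans Snormal.
  by exists set0; rewrite sub0set cards0.
have [x0 _] : exists x0 : T, True by case: P0 Strans {Suniq Snormal} => [|x0 p] // _; exists x0.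
have [Zstable Nfoot_unique] := hmonic.
pose H := mult (hfoot e Z x0) (lfoot e Z x0) (P0 :: S').
have [X [Xcard hit]] := hphi T H (@multC _ _ _ _ _)
  (lift_no_disjoint_mcycles esym eirr Zstable Nfoot_unique Suniq Strans Snormal (proj1 hplant)).
exists (X :&: Z); split; first exact: subsetIr.
  exact: leq_trans (subset_leq_card (subsetIl X Z)) Xcard.
exact: (count_footless_le esym Nfoot_unique Strans hit).
Qed.
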